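(* Let $i\in\{3\frac{1}{2},4,5\}$ and let $X$ be a locally connected locally compact $T_i$-space. Then the partially ordered set $(\mathscr{Y}_i(X),\leq)$ of all $T_i$ one-point connectifications of $X$ is a compact conditionally complete lattice.
   Context: Conventions: $T_{3\frac12}$ = completely regular and $T_1$; $T_4$ = normal and $T_1$; $T_5$ = hereditarily normal (every subspace normal) and $T_1$. A one-point connectification of $X$ is a connected space $Y$ containing $X$ as a dense subspace with $Y\setminus X$ a singleton; two are identified if there is a homeomorphism between them fixing every point of $X$. $\mathscr{Y}_i(X)$ is the set of (equivalence classes of) $T_i$ one-point connectifications of $X$, ordered by $Y_1\leq Y_2$ iff there is a continuous map $f:Y_2\to Y_1$ fixing every point of $X$. A conditionally complete lattice is a partially ordered set in which every non-empty bounded subset has a least upper bound and a greatest lower bound. A conditionally complete lattice $\mathscr{L}$ is compact if for every subset $\mathscr{H}\subseteq\mathscr{L}$ with no least upper bound there is a finite subset $\mathscr{H}'\subseteq\mathscr{H}$ which also has no least upper bound. *)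

From HB Require Import structures.
From mathcomp Require Import all_boot all_order all_algebra.
From mathcomp Require Import all_classical all_reals all_analysis.
From mathcomp Require Import Rstruct Rstruct_topology.
From Stdlib Require Import Rdefinitions.

Set Implicit Arguments.
Unset Strict Implicit.
Unset Printing Implicit Defensive.

Import Order.TTheory GRing.Theory Num.Theory.
Local Open Scope classical_set_scope.
Local Open Scope ring_scope.

Definition completely_regular (T : topologicalType) : Prop :=
  forall (B : set T) (a : T), closed B -> ~ B a ->
    exists f : T -> Rdefinitions.R,
      [/\ continuous f, (forall y, 0 <= f y <= 1), f a = 0
        & forall y, B y -> f y = 1].

Definition hereditarily_normal (T : topologicalType) : Prop :=
  forall (S B C : set T),
    (exists2 F, closed F & B = S `&` F) ->
    (exists2 F, closed F & C = S `&` F) ->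
    B `&` C = set0 ->
    exists U V : set T,
      [/\ open U, open V, B `<=` S `&` U, C `<=` S `&` V
        & (S `&` U) `&` (S `&` V) = set0].

Inductive sep_index := T3half | T4 | T5.

Definition is_T (i : sep_index) (T : topologicalType) : Prop :=
  match i with
  | T3half => completely_regular T /\ accessible_space T
  | T4 => normal_space T /\ accessible_space T
  | T5 => hereditarily_normal T /\ accessible_space T
  end.

Definition locally_connected_space (T : topologicalType) : Prop :=
  forall (x : T) (U : set T), nbhs x U ->
    exists V : set T, [/\ open V, V x, connected V & V `<=` U].

Record otop (T : choiceType) := OTop {
  otop_op : set_system T;
  otop_T : otop_op setT;
  otop_I : setI_closed otop_op;
  otop_U : forall (I : Type) (f : I -> set T),
      (forall i, otop_op (f i)) -> otop_op (\bigcup_i f i) }.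

Definition ospace (T : choiceType) (t : otop T) : Type := T.

HB.instance Definition _ (T : choiceType) (t : otop T) :=
  Choice.on (ospace t).
HB.instance Definition _ (T : choiceType) (t : otop T) :=
  isOpenTopological.Build (ospace t) (@otop_T T t) (@otop_I T t) (@otop_U T t).

(** A one-point connectification of [X] is represented by a topology [t] on
   [option X]: [Some x] is the point [x] of [X] and [None] is the added point.
   Two one-point connectifications that are homeomorphic by a homeomorphism
   fixing [X] pointwise give the same topology on [option X] (such a
   homeomorphism is the identity), so equivalence classes correspond exactly
   to topologies. *)

Definition one_point_connectification (i : sep_index) (X : topologicalType)
    (t : otop (option X)) : Prop :=
  [/\
      (forall U : set X,
         open U <-> exists2 V : set (ospace t), open V & U = Some @^-1` V),
      dense (range (fun x : X => (Some x : ospace t))),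
      connected [set: ospace t]
    &
      is_T i (ospace t)].

Definition Yi (i : sep_index) (X : topologicalType) : set (otop (option X)) :=
  [set t | one_point_connectification i t].
Arguments Yi i X : clear implicits.

Definition conn_le (X : topologicalType) (t1 t2 : otop (option X)) : Prop :=
  exists f : ospace t2 -> ospace t1,
    continuous f /\ forall x : X, f (Some x) = Some x.

Section OrderNotions.
Variables (T : Type) (le : T -> T -> Prop) (P : set T).

Definition partial_order_on : Prop :=
  [/\ forall a, P a -> le a a,
      forall a b c, P a -> P b -> P c -> le a b -> le b c -> le a c
    & forall a b, P a -> P b -> le a b -> le b a -> a = b].

Definition is_upper_bound (H : set T) (u : T) : Prop :=
  P u /\ forall h, H h -> le h u.
Definition is_lower_bound (H : set T) (u : T) : Prop :=
  P u /\ forall h, H h -> le u h.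

Definition is_lub (H : set T) (s : T) : Prop :=
  is_upper_bound H s /\ forall v, is_upper_bound H v -> le s v.
Definition is_glb (H : set T) (s : T) : Prop :=
  is_lower_bound H s /\ forall v, is_lower_bound H v -> le v s.

Definition has_lub (H : set T) : Prop := exists s, is_lub H s.

Definition conditionally_complete_lattice : Prop :=
  [/\ partial_order_on,
      (forall H, H `<=` P -> H !=set0 -> (exists u, is_upper_bound H u) ->
         has_lub H)
    & (forall H, H `<=` P -> H !=set0 -> (exists u, is_lower_bound H u) ->
         exists s, is_glb H s)].

Definition compact_cc_lattice : Prop :=
  conditionally_complete_lattice /\
  forall H, H `<=` P -> ~ has_lub H ->
    exists2 H', finite_set H' & H' `<=` H /\ ~ has_lub H'.

End OrderNotions.

(* Elements of [Yi i X] are topologies on [option X] inducing the topology of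
   [X], and for them [t1 <= t2] just says that [t2] is finer than [t1]: a
   continuous map fixing the dense subspace [X] of a Hausdorff space also fixes
   the added point [None].  Given a family [H], let [sup_top H] be its supremum
   topology, in which a neighbourhood of [None] has to contain a finite
   intersection of neighbourhoods of [None] taken in members of [H].  Each
   property defining [Yi i X] can be checked for [sup_top H] on finitely many
   members of [H] at a time: density and connectedness inside a common upper
   bound of these members, complete regularity by combining finitely many
   Urysohn functions, and (hereditary) normality through regularity at [None].
   Hence [sup_top H] is the least upper bound of [H] as soon as every finite
   subfamily of [H] is bounded above.  This gives least upper bounds of bounded
   families, greatest lower bounds as least upper bounds of the sets of lower
   bounds, and compactness. *)

From HB Require Import structures.
From mathcomp Require Import all_boot all_order all_algebra.
From mathcomp Require Import all_classical all_reals all_analysis.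
From mathcomp Require Import Rstruct Rstruct_topology.
From mathcomp.algebra_tactics Require Import ring lra.

Set Implicit Arguments.
Unset Strict Implicit.
Unset Printing Implicit Defensive.
Import Order.TTheory GRing.Theory Num.Theory.
Local Open Scope classical_set_scope.
Local Open Scope ring_scope.

Definition normal_in (T : topologicalType) (S : set T) : Prop :=
  forall B C : set T,
    (exists2 F, closed F & B = S `&` F) ->
    (exists2 F, closed F & C = S `&` F) ->
    B `&` C = set0 ->
    exists U V : set T,
      [/\ open U, open V, B `<=` S `&` U, C `<=` S `&` V
        & (S `&` U) `&` (S `&` V) = set0].

Lemma normal_in_setT (T : topologicalType) :
  normal_in [set: T] <-> normal_space T.
Proof.
rewrite (@normal_openP Rdefinitions.R); split => [hT A B cA cB AB|hT B C].
  have [U [V]] := hT A B (ex_intro2 _ _ A cA (esym (setTI A)))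
    (ex_intro2 _ _ B cB (esym (setTI B))) AB.
  by rewrite !setTI => -[]; exists U, V.
move=> [F cF ->] [G cG ->]; rewrite !setTI => FG.
by have [U [V []]] := hT F G cF cG FG; exists U, V; split; rewrite ?setTI.
Qed.

Lemma normal_hausdorff (T : topologicalType) :
  accessible_space T -> normal_space T -> hausdorff_space T.
Proof.
move=> T1 /(@normal_openP Rdefinitions.R) hT; rewrite open_hausdorff => x y xy.
have xy0 : [set x] `&` [set y] = set0.
  by apply/seteqP; split => // z [/= -> /eqP]; rewrite (negbTE xy).
have [U [V [oU oV xU yV UV]]] :=
  hT _ _ (@accessible_closed_set1 _ T1 x) (@accessible_closed_set1 _ T1 y) xy0.
exists (U, V); rewrite ?inE; first by split; [exact: xU | exact: yV].
by split=> //; apply/eqP.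
Qed.

Lemma completely_regular_hausdorff (T : topologicalType) :
  accessible_space T -> completely_regular T -> hausdorff_space T.
Proof.
move=> T1 hT; rewrite open_hausdorff => x y xy.
have ny : ~ [set y] x by move=> /= yx; move: xy; rewrite yx eqxx.
have [f [cf _ fx fy]] := hT _ _ (@accessible_closed_set1 _ T1 y) ny.
exists (f @^-1` [set r | r < 1/2], f @^-1` [set r | r > 1/2]).
  by rewrite !inE /= fx fy //; split; lra.
move/continuousP: cf => cf.
split => /=; [apply: cf; exact: open_lt | apply: cf; exact: open_gt |].
apply/eqP; rewrite -subset0 => z [/= lt_fz gt_fz].
by have := lt_trans gt_fz lt_fz; rewrite ltxx.
Qed.

Lemma is_T_accessible i (T : topologicalType) : is_T i T -> accessible_space T.
Proof. by case: i => -[]. Qed.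

Lemma is_T_hausdorff i (T : topologicalType) : is_T i T -> hausdorff_space T.
Proof.
case: i => -[hT T1].
- exact: completely_regular_hausdorff.
- exact: normal_hausdorff.
- by apply: normal_hausdorff => //; apply/normal_in_setT => B C; exact: hT.
Qed.

Lemma otop_ext (T : choiceType) (t1 t2 : otop T) :
  otop_op t1 = otop_op t2 -> t1 = t2.
Proof.
move: t1 t2 => [op1 ? ? ?] [op2 ? ? ?] /= e; subst op2.
by f_equal; apply: Prop_irrelevance.
Qed.

Definition finer (T : choiceType) (t1 t2 : otop T) := otop_op t1 `<=` otop_op t2.

Lemma finer_continuous (T : choiceType) (S : topologicalType) (t1 t2 : otop T)
    (f : T -> S) :
  finer t1 t2 -> continuous (f : ospace t1 -> S) -> continuous (f : ospace t2 -> S).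
Proof.
by move=> t12 /continuousP cf; apply/continuousP => A /cf /t12.
Qed.

Lemma preimage_image_Some (T : Type) (U : set T) : Some @^-1` (Some @` U) = U.
Proof. by apply/seteqP; split => [x [y Uy [<-]] | x Ux] //; exists x. Qed.

Section OnePointConnectifications.
Variables (i : sep_index) (X : topologicalType).
Implicit Types (t u : otop (option X)) (V N : set (option X)).

Lemma Yi_accessible t : Yi i X t -> accessible_space (ospace t).
Proof. by case=> _ _ _ /is_T_accessible. Qed.

Lemma Yi_open_notin_none t V :
  Yi i X t -> open (Some @^-1` V : set X) -> ~ V None -> otop_op t V.
Proof.
move=> Yt oV VN; case: (Yt) => emb _ _ _; have [W oW eW] := (emb _).1 oV.
have -> : V = W `&` ~` [set None].
  apply/seteqP; split => -[x|] //=.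
  - by move=> Vx; split => //; rewrite -[W _]/((Some @^-1` W) x) -eW.
  - by move=> [Wx _]; rewrite -[V _]/((Some @^-1` V) x) eW.
  - by move=> [_ /(_ erefl)].
apply: (@openI (ospace t)) => //; apply: closed_openC.
exact: (@accessible_closed_set1 (ospace t) (Yi_accessible Yt) None).
Qed.

Lemma Yi_open_of_none_nbhd t N V : Yi i X t ->
  open (Some @^-1` V : set X) -> otop_op t N -> N None -> N `<=` V -> otop_op t V.
Proof.
move=> Yt oV oN NN NV; have -> : V = (V `&` ~` [set None]) `|` N.
  apply/seteqP; split => [[x|] Vy|y [[]//|/NV//]]; [by left | by right].
apply: (@openU (ospace t)) (Yi_open_notin_none Yt _ _) oN; last by case=> _ /(_ erefl).
by rewrite (_ : _ @^-1` _ = Some @^-1` V) //; apply/seteqP; split=> [x []|x Vx].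
Qed.

Lemma Yi_continuous_fix_none t1 t2 (f : ospace t2 -> ospace t1) :
  Yi i X t1 -> Yi i X t2 -> continuous f -> (forall x, f (Some x) = Some x) ->
  f None = None.
Proof.
move=> Yt1 [emb2 dense2 _ T2i] /continuousP cf fX.
case E: (f None) => [x0|] //; exfalso.
have := is_T_hausdorff T2i; rewrite open_hausdorff => /(_ (Some x0) None isT).
move=> [[A B] /=]; rewrite !inE => -[Ax0 BN] [oA oB AB].
have oA1 : otop_op t1 (Some @` (Some @^-1` A)).
  apply: Yi_open_notin_none => //; last by case.
  by rewrite preimage_image_Some; apply/(emb2 _).2; exists A.
have [y [[fAy By] [x _ yx]]] : exists y, (f @^-1` (Some @` (Some @^-1` A)) `&` B
    `&` range (fun x : X => (Some x : ospace t2))) y.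
  apply: dense2; last exact: openI (cf _ oA1) oB.
  by exists None; split; rewrite //= E; exists x0.
subst y; move: fAy => /=; rewrite fX => -[y Ay [yx]]; subst y.
by have : (A `&` B) (Some x) by []; rewrite AB.
Qed.

Lemma finer_of_conn_le t1 t2 :
  Yi i X t1 -> Yi i X t2 -> conn_le t1 t2 -> finer t1 t2.
Proof.
move=> Yt1 Yt2 [f [cf fX]] V /((continuousP f).1 cf).
have fN := Yi_continuous_fix_none Yt1 Yt2 cf fX.
by congr otop_op; apply/seteqP; split => -[x|] /=; rewrite ?fX ?fN.
Qed.

Lemma conn_le_of_finer t1 t2 : finer t1 t2 -> conn_le t1 t2.
Proof. by move=> t12; exists id; split => //; apply/continuousP => A /t12. Qed.

Lemma Yi_partial_order : partial_order_on (@conn_le X) (Yi i X).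
Proof.
split=> [t _ | t1 t2 t3 Y1 Y2 Y3 t12 t23 | t1 t2 Y1 Y2 t12 t21].
- exact: conn_le_of_finer.
- apply: conn_le_of_finer => V.
  by move=> /(finer_of_conn_le Y1 Y2 t12) /(finer_of_conn_le Y2 Y3 t23).
- apply/otop_ext/seteqP; split.
  + exact: finer_of_conn_le Y1 Y2 t12.
  + exact: finer_of_conn_le Y2 Y1 t21.
Qed.

End OnePointConnectifications.

Lemma finite_set_In (T : Type) (s : seq T) : finite_set [set x | List.In x s].
Proof.
elim: s => [|a s IH]; first by rewrite (_ : [set _ | _] = set0) //; apply/seteqP.
apply: (@sub_finite_set _ _ (a |` [set x | List.In x s])); last by rewrite finite_setU.
by move=> x [->|]; [left | right].
Qed.

Definition finitely_bounded i (X : topologicalType) (H : set (otop (option X))) :=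
  forall F, finite_set F -> F `<=` H ->
    exists2 u, Yi i X u & forall t, F t -> finer t u.

Section SupTopology.
Variables (X : topologicalType) (H : set (otop (option X))).
Implicit Types (t u : otop (option X)) (V : set (option X))
  (s : seq (otop (option X) * set (option X))).

Definition nbhd_cap s : set (option X) := \bigcap_(p in [set p | List.In p s]) p.2.

Lemma nbhd_cap_open u s :
  (forall p, List.In p s -> otop_op u p.2) -> otop_op u (nbhd_cap s).
Proof.
elim: s => [_|a s IH us].
  have -> : nbhd_cap [::] = setT by apply/seteqP; split=> // y _ p [].
  exact: (@openT (ospace u)).
have -> : nbhd_cap (a :: s) = a.2 `&` nbhd_cap s.
  apply/seteqP; split=> [y ay | y [ay sy] p [<-|/sy]//].
  by split=> [|p sp]; apply: ay; [left | right].
apply: (@openI (ospace u)); first by apply: us; left.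
by apply: IH => p sp; apply: us; right.
Qed.

Definition none_nbhds s : Prop :=
  forall p, List.In p s -> [/\ H p.1, otop_op p.1 p.2 & p.2 None].

Lemma nbhd_cap_none s : none_nbhds s -> nbhd_cap s None.
Proof. by move=> sH p /sH[]. Qed.

Definition sup_open : set_system (option X) := fun V =>
  open (Some @^-1` V : set X) /\
  (V None -> exists2 s, none_nbhds s & nbhd_cap s `<=` V).

Lemma sup_openT : sup_open setT.
Proof.
split=> [|_]; first by rewrite preimage_setT; exact: openT.
by exists nil.
Qed.

Lemma sup_openI : setI_closed sup_open.
Proof.
move=> A B [oA NA] [oB NB]; split; first by rewrite preimage_setI; exact: openI.
move=> [AN BN]; have [s1 s1H s1A] := NA AN; have [s2 s2H s2B] := NB BN.
exists (s1 ++ s2).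
  by move=> p /List.in_app_iff[/s1H|/s2H].
by move=> y y12; split; [apply: s1A | apply: s2B] => p sp; apply: y12;
  apply/List.in_app_iff; [left | right].
Qed.

Lemma sup_openU (I : Type) (f : I -> set (option X)) :
  (forall k, sup_open (f k)) -> sup_open (\bigcup_k f k).
Proof.
move=> fo; split.
  by rewrite preimage_bigcup; apply: bigcup_open => k _; case: (fo k).
by move=> [k _ /(fo k).2[s sH sf]]; exists s => // y /sf; exists k.
Qed.

Definition sup_top : otop (option X) := OTop sup_openT sup_openI sup_openU.

Lemma sup_top_open_image_Some (U : set X) : open U -> otop_op sup_top (Some @` U).
Proof. by rewrite -{1}(preimage_image_Some U) => oU; split=> // -[]. Qed.

Lemma sup_top_subspace (U : set X) :
  open U <-> exists2 V : set (ospace sup_top), open V & U = Some @^-1` V.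
Proof.
split=> [oU|[V [oV _] ->] //].
by exists (Some @` U); [exact: sup_top_open_image_Some | rewrite preimage_image_Some].
Qed.

Lemma closed_sup_top_preimage (F : set (ospace sup_top)) :
  closed F -> closed (Some @^-1` F : set X).
Proof. by move=> /closed_openC[oF _]; rewrite preimage_setC openC in oF. Qed.

Section SubfamilyOfYi.
Variable i : sep_index.
Hypothesis HY : H `<=` Yi i X.

Lemma finer_sup_top t : H t -> finer t sup_top.
Proof.
move=> Ht V oV; split; first by case: (HY Ht) => emb _ _ _; apply/emb; exists V.
by move=> VN; exists [:: (t, V)] => [p [<-|]//|y /(_ (t, V) (or_introl erefl))].
Qed.

Lemma sup_top_accessible t : H t -> accessible_space (ospace sup_top).
Proof.
move=> Ht x y xy; have [A [oA xA yA]] := Yi_accessible (HY Ht) xy.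
by exists A; split=> //; exact: (finer_sup_top Ht) oA.
Qed.

Lemma finitely_bounded_nbhd_cap s : finitely_bounded i H -> none_nbhds s ->
  exists2 u, Yi i X u & otop_op u (nbhd_cap s).
Proof.
move=> fbH sH; have [|u Yu Fu] := fbH _ (finite_image fst (finite_set_In s)).
  by move=> _ [p /sH[Hp _ _] <-].
exists u => //; apply: nbhd_cap_open => p sp; have [_ op _] := sH p sp.
by apply: Fu op; exists p.
Qed.

Lemma sup_top_dense : finitely_bounded i H ->
  dense (range (fun x : X => (Some x : ospace sup_top))).
Proof.
move=> fbH O [[x|] Oy] oO; first by exists (Some x); split => //; exists x.
have [s sH sO] := oO.2 Oy.
have [u [_ dense_u _ _] ou] := finitely_bounded_nbhd_cap fbH sH.
have [|y [/sO Oy' Ry]] := dense_u _ _ ou; first by exists None; exact: nbhd_cap_none.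
by exists y.
Qed.

Lemma sup_top_clopen V : finitely_bounded i H -> sup_open V -> sup_open (~` V) ->
  exists2 u, Yi i X u & otop_op u V /\ otop_op u (~` V).
Proof.
move=> fbH; wlog VN : V / V None => [wlogV oV oCV|[oV NV] [oCV _]].
  have [VN|CVN] := pselect (V None); first exact: wlogV.
  have := wlogV _ CVN oCV; rewrite setCK => /(_ oV)[u Yu [? ?]].
  by exists u.
have [s sH sV] := NV VN; have [u Yu ou] := finitely_bounded_nbhd_cap fbH sH.
exists u => //; split; first exact: Yi_open_of_none_nbhd Yu oV ou (nbhd_cap_none sH) sV.
by apply: Yi_open_notin_none Yu oCV _.
Qed.

Lemma sup_top_connected : finitely_bounded i H -> connected [set: ospace sup_top].
Proof.
move=> fbH B B0 [C oC eBC] [D /closed_openC oCD eBD].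
move: eBC eBD; rewrite !setTI => eBC eBD; rewrite -eBD eBC in oCD; subst B.
have [u [_ _ conn_u _] [oB oCB]] := sup_top_clopen fbH oC oCD.
apply: (conn_u _ B0); first by exists C; rewrite ?setTI.
by exists C; [rewrite -openC | rewrite setTI].
Qed.

End SubfamilyOfYi.

End SupTopology.

Section CompletelyRegular.
Variables (X : topologicalType) (H : set (otop (option X))) (i : sep_index).
Hypotheses (HY : H `<=` Yi i X)
  (H_cr : forall t, H t -> completely_regular (ospace t)).

Lemma sup_top_urysohn_none s : none_nbhds H s ->
  exists f : option X -> Rdefinitions.R,
    [/\ continuous (f : ospace (sup_top H) -> Rdefinitions.R),
        forall y, 0 <= f y <= 1, f None = 0
      & forall y, ~ nbhd_cap s y -> f y = 1].
Proof.
elim: s => [_|[t W] s IH sH].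
  exists (fun=> 0); split=> // [|y|y]; first exact: cst_continuous.
    by rewrite lexx ler01.
  by case; move=> p [].
have /= [Ht oW WN] := sH (t, W) (or_introl erefl).
have [g [cg g01 g0 g1]] := IH (fun p sp => sH p (or_intror sp)).
have [f [cf f01 f0 f1]] := H_cr Ht (@open_closedC (ospace t) _ oW) (fun CWN => CWN WN).
have {}cf := finer_continuous (finer_sup_top HY Ht) cf.
(* [1 - (1 - f) (1 - g)] is 1 as soon as one of [f], [g] is. *)
pose F : ospace (sup_top H) -> Rdefinitions.R := f.
pose G : ospace (sup_top H) -> Rdefinitions.R := g.
have hE y : (F + G - F \* G) y = f y + g y - f y * g y by [].
exists (F + G - F \* G); split.
- move=> y; apply: (@continuousB _ Rdefinitions.R^o).
    by apply: (@continuousD _ Rdefinitions.R^o); [exact: cf | exact: cg].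
  by apply: continuousM; [exact: cf | exact: cg].
- move=> y; rewrite hE; move: (f01 y) (g01 y) => /andP[f0y f1y] /andP[g0y g1y].
  have h1 : 0 <= g y * (1 - f y) by apply: mulr_ge0; rewrite ?subr_ge0.
  have h2 : 0 <= (1 - g y) * (1 - f y) by apply: mulr_ge0; rewrite subr_ge0.
  by apply/andP; split; nra.
- by rewrite hE f0 g0 mulr0 subr0 addr0.
- move=> y ncap; rewrite hE.
  have [Wy|nWy] := pselect (W y); last by rewrite f1 //; ring.
  rewrite g1; first by ring.
  by move=> capy; apply: ncap => p [<-|/capy].
Qed.

Lemma sup_top_completely_regular t0 : H t0 -> completely_regular (ospace (sup_top H)).
Proof.
move=> Ht0 B [x|] cB nBa; last first.
  have [s sH sCB] := (closed_openC cB).2 nBa.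
  have [f [cf f01 f0 f1]] := sup_top_urysohn_none sH.
  by exists f; split=> // y By; apply: f1 => /sCB.
pose O := Some @` (Some @^-1` (~` B)).
have oO : otop_op t0 O.
  apply: Yi_open_notin_none (HY Ht0) _ _; last by case.
  by rewrite preimage_image_Some preimage_setC openC; exact: closed_sup_top_preimage.
have nOx : ~ (~` O) (Some x) by apply; exists x.
have [f [cf f01 fx f1]] := H_cr Ht0 (@open_closedC (ospace t0) _ oO) nOx.
exists f; split=> //; first exact: finer_continuous (finer_sup_top HY Ht0) cf.
by move=> y By; apply: f1 => -[z /= nBz ezy]; rewrite ezy in nBz.
Qed.

End CompletelyRegular.

Definition regular_at_none (X : topologicalType) (t : otop (option X)) : Prop :=
  forall W, otop_op t W -> W None -> exists N K : set (option X),
    [/\ otop_op t N, N None, closed (Some @^-1` K : set X), N `<=` K & K `<=` W].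

Lemma Yi_regular_at_none i (X : topologicalType) (t : otop (option X)) :
  Yi i X t -> normal_space (ospace t) -> regular_at_none t.
Proof.
move=> Yt /(@normal_openP Rdefinitions.R) nt W oW WN.
have cN := @accessible_closed_set1 (ospace t) (Yi_accessible Yt) None.
have NW : [set None] `&` ~` W = set0 by apply/seteqP; split=> // y [/= -> ?].
have [U [V [oU oV NU CWV UV]]] := nt _ _ cN (@open_closedC (ospace t) _ oW) NW.
exists U, (~` V); split=> //; first exact: NU.
- by rewrite preimage_setC closedC; case: Yt => emb _ _ _; apply/emb; exists V.
- by move=> y Uy Vy; have : (U `&` V) y by []; rewrite UV.
- by move=> y nVy; apply: contrapT => /CWV.
Qed.

Section Normal.
Variables (X : topologicalType) (H : set (otop (option X))) (i : sep_index).
Hypothesis HY : H `<=` Yi i X.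
Implicit Types (s : seq (otop (option X) * set (option X))) (W : set (option X)).

Lemma nbhd_cap_regular s : (forall t, H t -> regular_at_none t) -> none_nbhds H s ->
  exists2 s', none_nbhds H s' & exists K : set (option X),
    [/\ closed (Some @^-1` K : set X), nbhd_cap s' `<=` K & K `<=` nbhd_cap s].
Proof.
move=> regH; elim: s => [_|[t W] s IH sH].
  by exists nil => //; exists setT; split=> // y _ p [].
have /= [Ht oW WN] := sH (t, W) (or_introl erefl).
have [s' s'H [K [cK s'K Ks]]] := IH (fun p sp => sH p (or_intror sp)).
have [N [L [oN NN cL NL LW]]] := regH t Ht W oW WN.
exists ((t, N) :: s') => [p [<-|/s'H]//|]; exists (L `&` K); split.
- by rewrite preimage_setI; exact: closedI.
- move=> y Ny; split; first by apply: NL; apply: (Ny (t, N)); left.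
  by apply: s'K => p sp; apply: Ny; right.
- by move=> y [Ly Ky] p [<-|sp]; [exact: LW | exact: Ks].
Qed.

Lemma sup_top_regular_at_none :
  (forall t, H t -> regular_at_none t) -> regular_at_none (sup_top H).
Proof.
move=> regH W [_ NW] WN; have [s sH sW] := NW WN.
have [s' s'H [K [cK s'K Ks]]] := nbhd_cap_regular regH sH.
exists (nbhd_cap s'), K; split=> //; last exact: subset_trans sW.
- by apply: nbhd_cap_open => p /s'H[Hp op _]; exact: (finer_sup_top HY Hp) op.
- exact: nbhd_cap_none s'H.
Qed.

End Normal.

Section NormalIn.
Variables (X : topologicalType) (H : set (otop (option X))).
Hypothesis reg : regular_at_none (sup_top H).
Variable Z : set (ospace (sup_top H)).
Hypothesis ZX : normal_in (Some @^-1` Z : set X).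

Lemma sup_top_separate_in (F1 F2 : set (ospace (sup_top H))) :
  closed F1 -> closed F2 -> (Z `&` F1) `&` (Z `&` F2) = set0 -> ~ (Z `&` F2) None ->
  exists U V : set (ospace (sup_top H)),
    [/\ open U, open V, Z `&` F1 `<=` Z `&` U, Z `&` F2 `<=` Z `&` V
      & (Z `&` U) `&` (Z `&` V) = set0].
Proof.
move=> cF1 cF2 F12 nZF2N.
(* If [None] lies in [Z `&` F1], regularity at [None] puts a neighbourhood [N]
   of it inside a set [K] that misses [F2] and has closed trace on [X]; adding
   [K] to [F1] reduces the problem to a separation inside [X]. *)
have [N [K [oN cK NK KF2 F1N]]] : exists N K : set (option X),
    [/\ otop_op (sup_top H) N, closed (Some @^-1` K : set X), N `<=` K,
        K `<=` ~` F2 & (Z `&` F1) None -> N None].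
  have [ZF1N|nZF1N] := pselect ((Z `&` F1) None).
    have nF2N : ~ F2 None.
      move=> F2N; have : ((Z `&` F1) `&` (Z `&` F2)) None by case: ZF1N.
      by rewrite F12.
    have [N [K [oN NN cK NK KF2]]] := reg (closed_openC cF2) nF2N.
    by exists N, K.
  exists set0, set0; split=> //; first exact: (@open0 (ospace (sup_top H))).
  by rewrite preimage_set0; exact: closed0.
have dj : (Some @^-1` Z `&` (Some @^-1` F1 `|` Some @^-1` K)) `&`
          (Some @^-1` Z `&` Some @^-1` F2) = set0.
  apply/seteqP; split=> // x [[Zx [F1x|Kx]] [_ F2x]]; last exact: KF2 Kx F2x.
  by have : ((Z `&` F1) `&` (Z `&` F2)) (Some x) by []; rewrite F12.
have [U' [V' [oU' oV' F1U' F2V' UV']]] :=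
  ZX (ex_intro2 _ _ _ (closedU (closed_sup_top_preimage cF1) cK) erefl)
     (ex_intro2 _ _ _ (closed_sup_top_preimage cF2) erefl) dj.
exists (Some @` U' `|` N), (Some @` V'); split.
- by apply: (@openU (ospace (sup_top H))) => //; exact: sup_top_open_image_Some.
- exact: sup_top_open_image_Some.
- move=> [x|] [Zy F1y]; split=> //; last by right; exact: F1N.
  by left; exists x => //; have [] := F1U' x (conj Zy (or_introl F1y)).
- move=> [x|] [Zy F2y]; last by case: nZF2N.
  by split=> //; exists x => //; have [] := F2V' x (conj Zy F2y).
- apply/seteqP; split=> // -[x|] [[Zx Ux] [_ Vx]]; last by case: Vx.
  have U'x : U' x.
    case: Ux => [[x' U'x' [ex]]|Nx]; first by rewrite -ex.
    by have [] := F1U' x (conj Zx (or_intror (NK _ Nx))).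
  case: Vx => x' V'x' [ex]; rewrite ex in V'x'.
  by have : ((Some @^-1` Z `&` U') `&` (Some @^-1` Z `&` V')) x by []; rewrite UV'.
Qed.

Lemma sup_top_normal_in : normal_in Z.
Proof.
move=> B C [F1 cF1 ->] [F2 cF2 ->] F12.
have [ZF2N|] := pselect ((Z `&` F2) None); last exact: sup_top_separate_in.
have nZF1N : ~ (Z `&` F1) None.
  by move=> ZF1N; have : ((Z `&` F1) `&` (Z `&` F2)) None by []; rewrite F12.
rewrite setIC in F12.
have [U [V [oU oV F2U F1V UV]]] := sup_top_separate_in cF2 cF1 F12 nZF1N.
by exists V, U; split=> //; rewrite setIC.
Qed.

End NormalIn.

Section Lattice.
Variables (i : sep_index) (X : topologicalType).
Hypothesis TiX : is_T i X.
Implicit Types (H : set (otop (option X))) (u : otop (option X)).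

Lemma sup_top_is_T H t0 : H `<=` Yi i X -> H t0 -> is_T i (ospace (sup_top H)).
Proof.
move=> HY Ht0; have T1 := sup_top_accessible HY Ht0.
have Ht_T t : H t -> is_T i (ospace t) by move=> /HY[].
case: i TiX HY Ht_T => -[nX _] HY Ht_T; split=> //.
- by move=> B a; apply: (sup_top_completely_regular HY _ Ht0) => t /Ht_T[].
- apply/normal_in_setT/sup_top_normal_in.
    apply: (@sup_top_regular_at_none _ _ _ HY) => t Ht.
    exact: Yi_regular_at_none (HY _ Ht) (Ht_T t Ht).1.
  by rewrite preimage_setT; apply/normal_in_setT.
- move=> Z; apply: sup_top_normal_in; last exact: nX.
  apply: (@sup_top_regular_at_none _ _ _ HY) => t Ht.
  apply: Yi_regular_at_none (HY _ Ht) _.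
  by apply/normal_in_setT; exact: (Ht_T t Ht).1.
Qed.

Lemma sup_top_Yi H : H `<=` Yi i X -> H !=set0 -> finitely_bounded i H ->
  Yi i X (sup_top H).
Proof.
move=> HY [t0 Ht0] fbH; split.
- exact: sup_top_subspace.
- exact: sup_top_dense fbH.
- exact: sup_top_connected fbH.
- exact: sup_top_is_T HY Ht0.
Qed.

Lemma sup_top_lub H : H `<=` Yi i X -> H !=set0 -> finitely_bounded i H ->
  is_lub (@conn_le X) (Yi i X) H (sup_top H).
Proof.
move=> HY H0 fbH; split.
  split=> [|t Ht]; first exact: sup_top_Yi.
  exact/conn_le_of_finer/(finer_sup_top HY).
move=> u [Yu Hu]; apply: conn_le_of_finer => V [oV NV].
have [VN|nVN] := pselect (V None); last exact: Yi_open_notin_none Yu oV nVN.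
have [s sH sV] := NV VN.
apply: (Yi_open_of_none_nbhd Yu oV _ (nbhd_cap_none sH) sV).
apply: nbhd_cap_open => p /sH[Hp op _].
exact: (finer_of_conn_le (HY _ Hp) Yu (Hu _ Hp)) op.
Qed.

Lemma finitely_bounded_of_upper_bound H u : H `<=` Yi i X ->
  is_upper_bound (@conn_le X) (Yi i X) H u -> finitely_bounded i H.
Proof.
move=> HY [Yu Hu] F _ FH; exists u => // t /FH Ht.
exact: finer_of_conn_le (HY _ Ht) Yu (Hu _ Ht).
Qed.

Lemma Yi_conditionally_complete :
  conditionally_complete_lattice (@conn_le X) (Yi i X).
Proof.
split=> [|H HY H0 [u ub]|H HY [h Hh] [l lb]]; first exact: Yi_partial_order.
  exists (sup_top H); apply: sup_top_lub => //.
  exact: finitely_bounded_of_upper_bound ub.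
pose L := is_lower_bound (@conn_le X) (Yi i X) H.
have LY : L `<=` Yi i X by move=> v [].
have hL : is_upper_bound (@conn_le X) (Yi i X) L h.
  by split=> [|v [_]]; [exact: HY | apply].
have fbL := finitely_bounded_of_upper_bound LY hL.
have [[YL Lsup] supL] := sup_top_lub LY (ex_intro _ l lb) fbL.
exists (sup_top L); split=> [|v /Lsup //].
by split=> // t Ht; apply: supL; split=> [|v [_]]; [exact: HY | apply].
Qed.

Lemma Yi_has_lub_of_finite_lubs H : H `<=` Yi i X -> H !=set0 ->
  (forall F, finite_set F -> F `<=` H -> has_lub (@conn_le X) (Yi i X) F) ->
  has_lub (@conn_le X) (Yi i X) H.
Proof.
move=> HY H0 finH; exists (sup_top H); apply: sup_top_lub => // F fF FH.
have [u [[Yu Fu] _]] := finH F fF FH; exists u => // t Ft.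
exact: finer_of_conn_le (HY _ (FH _ Ft)) Yu (Fu _ Ft).
Qed.

End Lattice.

Theorem theorem3p2 (i : sep_index) (X : topologicalType) :
  locally_connected_space X -> locally_compact [set: X] -> is_T i X ->
  compact_cc_lattice (@conn_le X) (Yi i X).
Proof.
move=> _ _ TiX; split=> [|H HY nlubH]; first exact: Yi_conditionally_complete.
apply: contrapT => finH.
have finH_lub F : finite_set F -> F `<=` H -> has_lub (@conn_le X) (Yi i X) F.
  by move=> fF FH; apply: contrapT => nF; apply: finH; exists F.
have [H0|nH0] := pselect (H !=set0); first exact/nlubH/Yi_has_lub_of_finite_lubs.
apply/nlubH/finH_lub => //.
by rewrite (_ : H = set0) // -subset0 => t Ht; apply: nH0; exists t.
Qed.
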